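(* For every cardinal $\kappa$ there is a regular cardinal $\lambda>\kappa$ such that $\mathrm{Gal}(\mathcal{D}_\lambda,\lambda,2^\lambda)$ holds. In particular, it is impossible that $\mathrm{Gal}(\mathcal{D}_\theta,\theta,2^\theta)$ fails for every regular uncountable cardinal $\theta$.
   Context: For a regular uncountable cardinal $\theta$, $\mathcal{D}_\theta$ denotes the club filter on $\theta$. For a filter $\mathcal{F}$ and cardinals $\mu\leq\lambda$, $\mathrm{Gal}(\mathcal{F},\mu,\lambda)$ is the statement: for every $\mathcal{C}\subseteq\mathcal{F}$ with $|\mathcal{C}|=\lambda$ there is $\mathcal{E}\subseteq\mathcal{C}$ with $|\mathcal{E}|=\mu$ such that $\bigcap\mathcal{E}\in\mathcal{F}$. *)

(* Cardinals are modelled as well-ordered types (initial ordinals). *)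
From Stdlib Require Import Wellfounded.

Definition Univ := Type.

Definition injective {A B : Type} (f : A -> B) : Prop :=
  forall x y, f x = f y -> x = y.
Definition bijective {A B : Type} (f : A -> B) : Prop :=
  injective f /\ forall y, exists x, f x = y.
Definition card_le (A B : Type) : Prop := exists f : A -> B, injective f.
Definition equipotent (A B : Type) : Prop := exists f : A -> B, bijective f.
Definition card_lt (A B : Type) : Prop := card_le A B /\ ~ card_le B A.

Definition strict_wellorder {T : Type} (lt : T -> T -> Prop) : Prop :=
  (forall x, ~ lt x x) /\
  (forall x y z, lt x y -> lt y z -> lt x z) /\
  (forall x y, lt x y \/ x = y \/ lt y x) /\
  well_founded lt.

(* (T, lt) is a cardinal: a well-order (ordinal) not equipotent to any of its
   proper initial segments, i.e. an initial ordinal. *)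
Definition is_cardinal (T : Type) (lt : T -> T -> Prop) : Prop :=
  strict_wellorder lt /\
  forall t : T, ~ equipotent T {x : T | lt x t}.

Definition uncountable (T : Type) : Prop := ~ card_le T nat.

Definition unbounded {T : Type} (lt : T -> T -> Prop) (A : T -> Prop) : Prop :=
  forall x, exists c, A c /\ lt x c.

Definition regular_cardinal (T : Type) (lt : T -> T -> Prop) : Prop :=
  is_cardinal T lt /\
  forall A : T -> Prop, unbounded lt A -> equipotent {x : T | A x} T.

Definition regular_uncountable_cardinal (T : Type) (lt : T -> T -> Prop) : Prop :=
  regular_cardinal T lt /\ uncountable T.

Definition closed_set {T : Type} (lt : T -> T -> Prop) (C : T -> Prop) : Prop :=
  forall t, (exists c, C c /\ lt c t) ->
            (forall s, lt s t -> exists c, C c /\ lt s c /\ lt c t) -> C t.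

Definition club {T : Type} (lt : T -> T -> Prop) (C : T -> Prop) : Prop :=
  closed_set lt C /\ unbounded lt C.

Definition club_filter {T : Type} (lt : T -> T -> Prop) (A : T -> Prop) : Prop :=
  exists C, club lt C /\ forall x, C x -> A x.

(* Gal(F, mu, lambda) with mu, lambda given as types (cardinalities) *)
Definition Gal {T : Type} (F : (T -> Prop) -> Prop) (Mu Lam : Type) : Prop :=
  forall Cc : (T -> Prop) -> Prop,
    (forall A, Cc A -> F A) ->
    equipotent {A : T -> Prop | Cc A} Lam ->
    exists E : (T -> Prop) -> Prop,
      (forall A, E A -> Cc A) /\
      equipotent {A : T -> Prop | E A} Mu /\
      F (fun x => forall A, E A -> A x).

(* Gal(D_theta, theta, 2^theta); 2^theta is the cardinality of the power set T -> Prop *)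
Definition Gal_club (T : Type) (lt : T -> T -> Prop) : Prop :=
  Gal (club_filter lt) T (T -> Prop).

(* Let M = nat -> K + bool, so that mu = |M| satisfies mu + mu = mu * mu = mu >= |K|, aleph_0,
   and let lambda be the least ordinal with 2^lambda > 2^mu; call a set A small when
   2^A <= 2^mu. Every proper initial segment of lambda is small and lambda <= 2^mu. A family
   of points of lambda indexed by a small set is bounded, for otherwise 2^lambda would embed
   into prod_i 2^(alpha_i) <= (2^mu)^mu = 2^mu. Hence lambda is regular and clubs are closed
   under small and under diagonal intersections.
   For Galvin's property, take 2^lambda members of the club filter. If every member j had
   some alpha with at most |alpha| members agreeing with j on [0, alpha], the family would
   inject into lambda * 2^mu * lambda, of size 2^mu < 2^lambda. So some j is "thick": for
   every alpha it has more than |alpha| such members, and by recursion we choose distinct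
   i_alpha agreeing with j on [0, alpha]. The intersection of the i_alpha contains the club
   of j intersected with the diagonal intersection of the clubs of the i_alpha. *)

From Stdlib Require Import Classical ClassicalEpsilon FunctionalExtensionality PropExtensionality.
From Stdlib Require Import ProofIrrelevance PeanoNat Wellfounded.
From mathcomp Require ssreflect ssrbool eqtype boolp wochoice.

Local Notation choose H := (proj1_sig (constructive_indefinite_description _ H)).
Local Notation choose_spec H := (proj2_sig (constructive_indefinite_description _ H)).

Lemma card_le_refl (A : Type) : card_le A A.
Proof. exists (fun x => x). intros x y E. exact E. Qed.

Lemma card_le_trans (A B C : Type) : card_le A B -> card_le B C -> card_le A C.
Proof.
  intros [f f_inj] [g g_inj]. exists (fun x => g (f x)).
  intros x y E. exact (f_inj _ _ (g_inj _ _ E)).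
Qed.

Lemma card_le_equipotent (A B : Type) : equipotent A B -> card_le A B.
Proof. intros [f [f_inj _]]. exists f. exact f_inj. Qed.

Lemma card_ge_equipotent (A B : Type) : equipotent A B -> card_le B A.
Proof.
  intros [f [_ f_surj]]. exists (fun b => choose (f_surj b)).
  intros b b' E. rewrite <- (choose_spec (f_surj b)), <- (choose_spec (f_surj b')), E. reflexivity.
Qed.

Lemma equipotent_of_bijective_inv (A B : Type) (g : B -> A) : bijective g -> equipotent A B.
Proof.
  intros [g_inj g_surj]. exists (fun a => choose (g_surj a)). split.
  - intros a a' E. rewrite <- (choose_spec (g_surj a)), <- (choose_spec (g_surj a')), E. reflexivity.
  - intros b. exists (g b). apply g_inj. exact (choose_spec (g_surj (g b))).
Qed.

Lemma card_le_proj1_sig (A : Type) (P : A -> Prop) : card_le {x | P x} A.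
Proof.
  exists (@proj1_sig _ _). intros [x px] [y py] E. exact (subset_eq_compat _ _ _ _ _ _ E).
Qed.

Lemma card_le_subtype (A : Type) (P Q : A -> Prop) :
  (forall x, P x -> Q x) -> card_le {x | P x} {x | Q x}.
Proof.
  intros PQ. exists (fun x => exist Q (proj1_sig x) (PQ _ (proj2_sig x))).
  intros [x px] [y py] E. apply subset_eq_compat. exact (f_equal (@proj1_sig _ _) E).
Qed.

Lemma card_le_sig_sig (A : Type) (P Q : A -> Prop) :
  card_le {y : {x | P x} | Q (proj1_sig y)} {x | Q x}.
Proof.
  exists (fun y => exist Q (proj1_sig (proj1_sig y)) (proj2_sig y)).
  intros [[y py] qy] [[z pz] qz] E. apply subset_eq_compat, subset_eq_compat.
  exact (f_equal (@proj1_sig _ _) E).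
Qed.

Lemma card_le_prod (A A' B B' : Type) :
  card_le A A' -> card_le B B' -> card_le (A * B) (A' * B').
Proof.
  intros [f f_inj] [g g_inj]. exists (fun p => (f (fst p), g (snd p))).
  intros [a b] [a' b'] E. injection E as Ea Eb. rewrite (f_inj _ _ Ea), (g_inj _ _ Eb). reflexivity.
Qed.

Lemma card_le_sum (A A' B B' : Type) :
  card_le A A' -> card_le B B' -> card_le (A + B) (A' + B').
Proof.
  intros [f f_inj] [g g_inj].
  exists (fun s => match s with inl a => inl (f a) | inr b => inr (g b) end).
  intros [a|b] [a'|b'] E; try discriminate; injection E as E; f_equal; auto.
Qed.

Lemma card_le_sum_prod (A : Type) (a0 a1 : A) : a0 <> a1 -> card_le (A + A) (A * A).
Proof.
  intros a01. exists (fun s => match s with inl a => (a, a0) | inr a => (a, a1) end).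
  intros [a|a] [b|b] E; injection E; intros; subst; easy.
Qed.

Lemma card_le_seq_prod (X : Type) : card_le ((nat -> X) * (nat -> X)) (nat -> X).
Proof.
  exists (fun p n => if Nat.even n then fst p (Nat.div2 n) else snd p (Nat.div2 n)).
  intros [f g] [f' g'] E. f_equal; apply functional_extensionality; intros k.
  - pose proof (f_equal (fun h => h (2 * k)) E) as Ek. cbv beta in Ek.
    rewrite Nat.even_even, Nat.div2_even in Ek. exact Ek.
  - pose proof (f_equal (fun h => h (2 * k + 1)) E) as Ek. cbv beta in Ek.
    rewrite Nat.even_odd, Nat.div2_odd' in Ek. exact Ek.
Qed.

Lemma card_le_nat_seq (X : Type) (x0 x1 : X) : x0 <> x1 -> card_le nat (nat -> X).
Proof.
  intros x01. exists (fun n m => if Nat.eqb m n then x1 else x0).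
  intros n n' E. pose proof (f_equal (fun h => h n) E) as En. cbv beta in En.
  rewrite Nat.eqb_refl in En. destruct (Nat.eqb_spec n n') as [e|_]; [exact e|].
  exfalso. exact (x01 (eq_sym En)).
Qed.

Lemma card_le_pow (A B : Type) : card_le A B -> card_le (A -> Prop) (B -> Prop).
Proof.
  intros [h h_inj]. exists (fun S b => exists a, h a = b /\ S a).
  intros S T E. apply functional_extensionality; intros a. apply propositional_extensionality.
  assert (image_at : forall U : A -> Prop, (exists a', h a' = h a /\ U a') <-> U a).
  { intros U. split.
    - intros [a' [e Ua']]. rewrite <- (h_inj _ _ e). exact Ua'.
    - intros Ua. exists a. split; [reflexivity | exact Ua]. }
  rewrite <- (image_at S), <- (image_at T), (f_equal (fun F => F (h a)) E). reflexivity.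
Qed.

Lemma cantor (A : Type) : ~ card_le (A -> Prop) A.
Proof.
  intros [f f_inj].
  set (D a := exists S, f S = a /\ ~ S a).
  assert (DfD : ~ D (f D)).
  { intros [S [e nS]]. rewrite (f_inj _ _ e) in nS. apply nS. exists D. split; [reflexivity | exact nS]. }
  apply DfD. exists D. split; [reflexivity | exact DfD].
Qed.

Lemma card_le_pow_sum (A B : Type) : card_le (A + B -> Prop) ((A -> Prop) * (B -> Prop)).
Proof.
  exists (fun P => (fun a => P (inl a), fun b => P (inr b))).
  intros P Q E. injection E as Ea Eb. apply functional_extensionality; intros [a|b].
  - exact (f_equal (fun F => F a) Ea).
  - exact (f_equal (fun F => F b) Eb).
Qed.

Lemma card_le_pow_pair (A B : Type) : card_le ((A -> Prop) * (B -> Prop)) (A + B -> Prop).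
Proof.
  exists (fun p s => match s with inl a => fst p a | inr b => snd p b end).
  intros [S T] [S' T'] E. f_equal; apply functional_extensionality.
  - intros a. exact (f_equal (fun F => F (inl a)) E).
  - intros b. exact (f_equal (fun F => F (inr b)) E).
Qed.

Lemma card_le_pow_curry (A B : Type) : card_le (A -> B -> Prop) (A * B -> Prop).
Proof.
  exists (fun G p => G (fst p) (snd p)).
  intros G G' E. apply functional_extensionality; intros a. apply functional_extensionality; intros b.
  exact (f_equal (fun F => F (a, b)) E).
Qed.

Lemma card_le_fibers (X I Z : Type) (p : X -> I) :
  (forall x, card_le {y | p y = p x} Z) -> card_le X (I * Z).
Proof.
  intros fiber_le.
  assert (fiber_le' : forall i, card_le {y | p y = i} Z).
  { intros i. destruct (classic (exists x, p x = i)) as [[x <-] | none].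
    - exact (fiber_le x).
    - exists (fun u => False_rect Z (none (ex_intro _ (proj1_sig u) (proj2_sig u)))).
      intros u. exfalso. exact (none (ex_intro _ (proj1_sig u) (proj2_sig u))). }
  set (g i := choose (fiber_le' i)).
  exists (fun x => (p x, g (p x) (exist _ x eq_refl))).
  intros x y E. injection E as Ep Eg.
  assert (transport : forall i (e : p x = i), g i (exist _ x e) = g (p x) (exist _ x eq_refl))
    by (intros i e; destruct e; reflexivity).
  rewrite <- (transport _ Ep) in Eg.
  exact (f_equal (@proj1_sig _ _) (choose_spec (fiber_le' (p y)) _ _ Eg)).
Qed.

Lemma well_founded_least (X : Type) (R : X -> X -> Prop) (P : X -> Prop) :
  well_founded R -> (exists x, P x) -> exists z, P z /\ forall y, P y -> ~ R y z.
Proof.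
  intros R_wf [x Px]. apply NNPP. intros no_least.
  assert (never : forall z, Acc R z -> ~ P z).
  { intros z Az. induction Az as [z _ IH]. intros Pz. apply no_least. exists z.
    split; [exact Pz|]. intros y Py Ryz. exact (IH y Ryz Py). }
  exact (never x (R_wf x) Px).
Qed.

Lemma wf_recursive_choice (X B : Type) (R : X -> X -> Prop)
    (P : forall x, (forall y, R y x -> B) -> B -> Prop) :
  well_founded R -> (forall x rec, exists b, P x rec b) ->
  exists f : X -> B, forall x, P x (fun y _ => f y) (f x).
Proof.
  intros R_wf HP. set (F x rec := choose (HP x rec)).
  exists (Fix R_wf (fun _ => B) F). intros x. rewrite Fix_eq.
  - exact (choose_spec (HP x _)).
  - intros y f g fg. unfold F. replace f with g; [reflexivity|].
    apply functional_extensionality_dep; intros z. apply functional_extensionality_dep; intros h.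
    symmetry. apply fg.
Qed.

Module WellOrderingPrinciple.
Import mathcomp.boot.ssreflect mathcomp.boot.ssrbool mathcomp.boot.eqtype.
Import mathcomp.classical.boolp mathcomp.classical.wochoice.

Lemma exists_least_order (T : Type) : exists R : T -> T -> Prop,
  forall P : T -> Prop, (exists x, P x) ->
    exists z, P z /\ (forall y, P y -> R z y) /\
      forall z', P z' -> (forall y, P y -> R z' y) -> z' = z.
Proof.
case: (well_ordering_principle {classic T}) => R R_wo.
exists (fun x y => R x y) => P [x Px].
have ne : nonempty (fun x : {classic T} => `[< P x >]) by exists x; apply/asboolP.
case: (R_wo _ ne) => z [[/asboolP Pz z_least] z_uniq].
exists z; split=> //; split=> [y Py|z' Pz' z'_least]; first by apply: z_least; apply/asboolP.
by symmetry; apply: z_uniq; split=> [|y /asboolP Py]; [apply/asboolP | apply: z'_least].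
Qed.

End WellOrderingPrinciple.

Lemma exists_strict_wellorder (T : Type) : exists lt : T -> T -> Prop, strict_wellorder lt.
Proof.
  destruct (WellOrderingPrinciple.exists_least_order T) as [R least].
  assert (least3 : forall x y z, exists m, (m = x \/ m = y \/ m = z) /\
            R m x /\ R m y /\ R m z /\
            forall m', R m' x -> R m' y -> R m' z -> (m' = x \/ m' = y \/ m' = z) -> m' = m).
  { intros x y z.
    destruct (least (fun w => w = x \/ w = y \/ w = z) (ex_intro _ x (or_introl eq_refl)))
      as [m [Pm [m_least m_uniq]]].
    exists m. split; [exact Pm|]. split; [apply m_least; left; reflexivity|].
    split; [apply m_least; right; left; reflexivity|].
    split; [apply m_least; right; right; reflexivity|].
    intros m' m'x m'y m'z Pm'. apply m_uniq; [exact Pm'|]. intros w [-> | [-> | ->]]; assumption. }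
  assert (R_refl : forall x, R x x).
  { intros x. destruct (least3 x x x) as [m [[-> | [-> | ->]] [Rmx _]]]; exact Rmx. }
  assert (R_antisym : forall x y, R x y -> R y x -> x = y).
  { intros x y Rxy Ryx. destruct (least3 x y y) as [m [_ [_ [_ [_ m_uniq]]]]].
    rewrite (m_uniq x (R_refl x) Rxy Rxy (or_introl eq_refl)).
    exact (eq_sym (m_uniq y Ryx (R_refl y) (R_refl y) (or_intror (or_introl eq_refl)))). }
  assert (R_total : forall x y, R x y \/ R y x).
  { intros x y. destruct (least3 x y y) as [m [[-> | [-> | ->]] [Rmx [Rmy _]]]];
      [left | right | right]; assumption. }
  assert (R_trans : forall x y z, R x y -> R y z -> R x z).
  { intros x y z Rxy Ryz.
    destruct (least3 x y z) as [m [[-> | [-> | ->]] [Rmx [Rmy [Rmz _]]]]].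
    - exact Rmz.
    - rewrite (R_antisym x y Rxy Rmx). exact Rmz.
    - rewrite <- (R_antisym y z Ryz Rmy). exact Rxy. }
  exists (fun x y => x <> y /\ R x y). split; [|split; [|split]].
  - intros x [n _]. exact (n eq_refl).
  - intros x y z [nxy Rxy] [nyz Ryz]. split.
    + intros <-. exact (nyz (R_antisym _ _ Ryz Rxy)).
    + exact (R_trans _ _ _ Rxy Ryz).
  - intros x y. destruct (classic (x = y)) as [e|n]; [right; left; exact e|].
    destruct (R_total x y); [left | right; right]; split; auto.
  - intros x. apply NNPP. intros not_acc.
    destruct (least (fun z => ~ Acc (fun x y => x <> y /\ R x y) z) (ex_intro _ x not_acc))
      as [m [m_not_acc [m_least _]]].
    apply m_not_acc. constructor. intros y [nym Rym]. apply NNPP. intros y_not_acc.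
    exact (nym (R_antisym _ _ Rym (m_least y y_not_acc))).
Qed.

Definition sum_lt {A B : Type} (ltA : A -> A -> Prop) (ltB : B -> B -> Prop) (x y : A + B) : Prop :=
  match x, y with
  | inl a, inl a' => ltA a a'
  | inr b, inr b' => ltB b b'
  | inl _, inr _ => True
  | inr _, inl _ => False
  end.

Lemma strict_wellorder_sum (A B : Type) (ltA : A -> A -> Prop) (ltB : B -> B -> Prop) :
  strict_wellorder ltA -> strict_wellorder ltB -> strict_wellorder (sum_lt ltA ltB).
Proof.
  intros [irrA [transA [triA wfA]]] [irrB [transB [triB wfB]]].
  split; [|split; [|split]].
  - intros [a|b]; simpl; auto.
  - intros [a|b] [a'|b'] [a''|b'']; simpl; eauto; tauto.
  - intros [a|b] [a'|b']; simpl; auto.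
    + destruct (triA a a') as [h|[->|h]]; auto.
    + destruct (triB b b') as [h|[->|h]]; auto.
  - assert (acc_inl : forall a, Acc (sum_lt ltA ltB) (inl a)).
    { intros a. induction (wfA a) as [a _ IH]. constructor.
      intros [a'|b'] h; simpl in h; [exact (IH a' h) | contradiction]. }
    intros [a|b]; [apply acc_inl|].
    induction (wfB b) as [b _ IH]. constructor.
    intros [a'|b'] h; simpl in h; [apply acc_inl | exact (IH b' h)].
Qed.

Lemma strict_wellorder_unit : strict_wellorder (fun _ _ : unit => False).
Proof.
  split; [|split; [|split]]; auto.
  - intros [] []; auto.
  - intros x. constructor. intros y [].
Qed.

Lemma strict_wellorder_sub (X : Type) (lt : X -> X -> Prop) (P : X -> Prop) :
  strict_wellorder lt -> strict_wellorder (fun x y : {t | P t} => lt (proj1_sig x) (proj1_sig y)).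
Proof.
  intros [irr [trans [tri wf]]]. split; [|split; [|split]].
  - intros x. apply irr.
  - intros x y z. apply trans.
  - intros [x px] [y py]. destruct (tri x y) as [h|[->|h]]; simpl; auto.
    right; left. apply subset_eq_compat. reflexivity.
  - exact (wf_inverse_image _ _ lt (@proj1_sig _ _) wf).
Qed.

Section Small.

Variable M : Type.
Hypothesis M_sum : card_le (M + M) M.
Hypothesis M_prod : card_le (M * M) M.
Variable m0 : M.
Hypothesis nat_le_M : card_le nat M.

Definition small (A : Type) : Prop := card_le (A -> Prop) (M -> Prop).

Lemma small_card_le (A B : Type) : card_le A B -> small B -> small A.
Proof. intros AB HB. exact (card_le_trans _ _ _ (card_le_pow _ _ AB) HB). Qed.

Lemma card_le_pow_M_prod : card_le ((M -> Prop) * (M -> Prop)) (M -> Prop).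
Proof. exact (card_le_trans _ _ _ (card_le_pow_pair M M) (card_le_pow _ _ M_sum)). Qed.

Lemma card_le_pow_M_sum : card_le ((M -> Prop) + (M -> Prop)) (M -> Prop).
Proof.
  assert (distinct : (fun _ : M => True) <> (fun _ => False)).
  { intros E. rewrite <- (f_equal (fun F => F m0) E). exact I. }
  exact (card_le_trans _ _ _ (card_le_sum_prod _ _ _ distinct) card_le_pow_M_prod).
Qed.

Lemma card_le_sum_M_pow_unit : card_le ((M + (M -> Prop)) + unit) (M -> Prop).
Proof.
  assert (M_le_pow : card_le M (M -> Prop)).
  { exists (fun m x => x = m). intros m m' E.
    rewrite <- (f_equal (fun S => S m) E). reflexivity. }
  assert (unit_le_pow : card_le unit (M -> Prop)) by (exists (fun _ _ => True); intros [] [] _; reflexivity).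
  apply (card_le_trans _ _ _
           (card_le_sum _ _ _ _ (card_le_sum _ _ _ _ M_le_pow (card_le_refl _)) unit_le_pow)).
  exact (card_le_trans _ _ _ (card_le_sum _ _ _ _ card_le_pow_M_sum (card_le_refl _)) card_le_pow_M_sum).
Qed.

Lemma card_le_prod_pow_M (A B : Type) :
  card_le A (M -> Prop) -> card_le B (M -> Prop) -> card_le (A * B) (M -> Prop).
Proof. intros HA HB. exact (card_le_trans _ _ _ (card_le_prod _ _ _ _ HA HB) card_le_pow_M_prod). Qed.

Lemma small_sum (A B : Type) : small A -> small B -> small (A + B).
Proof.
  intros HA HB. exact (card_le_trans _ _ _ (card_le_pow_sum A B) (card_le_prod_pow_M _ _ HA HB)).
Qed.

Lemma small_unit : small unit.
Proof.
  exists (fun P (_ : M) => P tt). intros P Q E.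
  apply functional_extensionality; intros []. exact (f_equal (fun F => F m0) E).
Qed.

Lemma small_nat : small nat.
Proof. exact (small_card_le _ _ nat_le_M (card_le_refl _)). Qed.

Lemma small_bool : small bool.
Proof.
  apply (small_card_le _ (unit + unit)); [|exact (small_sum _ _ small_unit small_unit)].
  exists (fun b : bool => if b then inl tt else inr tt). intros [|] [|] E; easy.
Qed.

Lemma card_le_exp_small (I : Type) : small I -> card_le (I -> M -> Prop) (M -> Prop).
Proof.
  intros [p p_inj].
  apply (card_le_trans _ (M -> M -> Prop)).
  - exists (fun F m => p (fun i => F i m)). intros F G E.
    apply functional_extensionality; intros i. apply functional_extensionality; intros m.
    exact (f_equal (fun S => S i) (p_inj _ _ (f_equal (fun H => H m) E))).
  - exact (card_le_trans _ _ _ (card_le_pow_curry M M) (card_le_pow _ _ M_prod)).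
Qed.

Section Lambda.

Variables (L : Type) (lt : L -> L -> Prop).
Hypothesis lt_wo : strict_wellorder lt.
Hypothesis small_segment : forall x, small {y | lt y x}.
Hypothesis L_not_small : ~ small L.
Hypothesis L_le_pow_M : card_le L (M -> Prop).

Definition le (x y : L) : Prop := lt x y \/ x = y.

Lemma lt_irrefl x : ~ lt x x.
Proof. apply lt_wo. Qed.

Lemma lt_trans x y z : lt x y -> lt y z -> lt x z.
Proof. apply lt_wo. Qed.

Lemma lt_trichotomy x y : lt x y \/ x = y \/ lt y x.
Proof. apply lt_wo. Qed.

Lemma lt_wf : well_founded lt.
Proof. apply lt_wo. Qed.

Lemma le_lt_trans x y z : le x y -> lt y z -> lt x z.
Proof. intros [xy | <-] yz; [exact (lt_trans _ _ _ xy yz) | exact yz]. Qed.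

Lemma lt_le_trans x y z : lt x y -> le y z -> lt x z.
Proof. intros xy [yz | <-]; [exact (lt_trans _ _ _ xy yz) | exact xy]. Qed.

Lemma not_lt_le x y : ~ lt x y -> le y x.
Proof. intros nxy. destruct (lt_trichotomy x y) as [h|[->|h]]; [contradiction | right | left]; auto. Qed.

Lemma le_max_below x y t : lt x t -> lt y t -> exists m, lt m t /\ le x m /\ le y m.
Proof.
  intros xt yt. destruct (classic (lt x y)) as [xy | nxy].
  - exists y. repeat split; [exact yt | left; exact xy | right; reflexivity].
  - exists x. repeat split; [exact xt | right; reflexivity | exact (not_lt_le _ _ nxy)].
Qed.

Lemma lt_separated_injective (B : Type) (f : L -> B) :
  (forall x y, lt y x -> f x <> f y) -> injective f.
Proof.
  intros sep x y E. destruct (lt_trichotomy x y) as [h|[h|h]].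
  - exfalso. exact (sep y x h (eq_sym E)).
  - exact h.
  - exfalso. exact (sep x y h E).
Qed.

Lemma small_le_segment x : small {y | le y x}.
Proof.
  apply (small_card_le _ ({y | lt y x} + unit)); [|exact (small_sum _ _ (small_segment x) small_unit)].
  exists (fun y => match excluded_middle_informative (lt (proj1_sig y) x) with
                   | left h => inl (exist _ (proj1_sig y) h)
                   | right _ => inr tt
                   end).
  intros [y hy] [z hz]; simpl.
  destruct (excluded_middle_informative (lt y x)) as [yx|nyx];
    destruct (excluded_middle_informative (lt z x)) as [zx|nzx]; intros E; try discriminate.
  - injection E as E. apply subset_eq_compat. exact E.
  - apply subset_eq_compat. destruct hy as [h | ->]; [contradiction|].
    destruct hz as [h | ->]; [contradiction | reflexivity].
Qed.

Lemma cofinal_not_small (I : Type) (f : I -> L) :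
  small I -> ~ (forall z, exists i, lt z (f i)).
Proof.
  intros HI cofinal. apply L_not_small.
  apply (card_le_trans _ (I -> M -> Prop)); [|exact (card_le_exp_small _ HI)].
  set (e z := choose (small_segment z)).
  exists (fun S i => e (f i) (fun w => S (proj1_sig w))).
  intros S T E. apply functional_extensionality; intros x.
  destruct (cofinal x) as [i xi].
  pose proof (choose_spec (small_segment (f i)) _ _ (f_equal (fun G => G i) E)) as Ei.
  exact (f_equal (fun G => G (exist _ x xi)) Ei).
Qed.

Lemma exists_gt x : exists y, lt x y.
Proof.
  apply NNPP. intros no_gt. apply L_not_small.
  apply (small_card_le _ {y | le y x}); [|exact (small_le_segment x)].
  exists (fun y => exist _ y (not_lt_le _ _ (fun h => no_gt (ex_intro _ y h)))).
  intros y z E. exact (f_equal (@proj1_sig _ _) E).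
Qed.

Lemma small_bounded (I : Type) (f : I -> L) : small I -> exists b, forall i, lt (f i) b.
Proof.
  intros HI. apply NNPP. intros unbounded_f. apply (cofinal_not_small I f HI).
  intros z. destruct (exists_gt z) as [b zb]. apply NNPP. intros none. apply unbounded_f.
  exists b. intros i. apply NNPP. intros nib. apply none. exists i.
  exact (lt_le_trans _ _ _ zb (not_lt_le _ _ nib)).
Qed.

Lemma exists_closure_point (st : L -> L) : (forall y, lt y (st y)) ->
  forall x, exists d, lt x d /\ forall y, lt y d -> exists z, lt y z /\ lt (st z) d.
Proof.
  intros st_gt x. set (s n := Nat.iter n st x).
  destruct (small_bounded nat s small_nat) as [b sb].
  destruct (well_founded_least _ lt (fun d => forall n, lt (s n) d) lt_wf (ex_intro _ b sb))
    as [d [sd d_least]].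
  exists d. split; [exact (sd 0) |].
  intros y yd. apply NNPP. intros none. apply (d_least y); [|exact yd].
  intros n. apply NNPP. intros nsy. apply none. exists (s (S n)). split.
  - exact (le_lt_trans _ _ _ (not_lt_le _ _ nsy) (st_gt (s n))).
  - exact (sd (S (S n))).
Qed.

Lemma club_inter (I : Type) (C : I -> L -> Prop) :
  small I -> (forall i, club lt (C i)) -> club lt (fun x => forall i, C i x).
Proof.
  intros HI HC. split.
  - intros t [c [Cc ct]] cofinal i. apply (proj1 (HC i)).
    + exists c. split; [exact (Cc i) | exact ct].
    + intros s st. destruct (cofinal s st) as [c' [Cc' sc't]]. exists c'. split; [exact (Cc' i) | exact sc't].
  - set (next i y := choose (proj2 (HC i) y)).
    assert (next_spec : forall i y, C i (next i y) /\ lt y (next i y))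
      by (intros i y; exact (choose_spec (proj2 (HC i) y))).
    assert (step : forall y, exists b, lt y b /\ forall i, lt (next i y) b).
    { intros y.
      destruct (small_bounded (I + unit) (fun u => match u with inl i => next i y | inr _ => y end)
                  (small_sum _ _ HI small_unit)) as [b Hb].
      exists b. split; [exact (Hb (inr tt)) | intros i; exact (Hb (inl i))]. }
    intros x.
    destruct (exists_closure_point (fun y => choose (step y)) (fun y => proj1 (choose_spec (step y))) x)
      as [d [xd Hd]].
    assert (C_cofinal : forall i y, lt y d -> exists c, C i c /\ lt y c /\ lt c d).
    { intros i y yd. destruct (Hd y yd) as [z [yz zd]]. exists (next i z).
      split; [apply next_spec|]. split.
      - exact (lt_trans _ _ _ yz (proj2 (next_spec i z))).
      - exact (lt_trans _ _ _ (proj2 (choose_spec (step z)) i) zd). }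
    exists d. split; [|exact xd]. intros i. apply (proj1 (HC i)).
    + destruct (C_cofinal i x xd) as [c [Cc [_ cd]]]. exists c. split; assumption.
    + intros s sd. exact (C_cofinal i s sd).
Qed.

Lemma club_and (C1 C2 : L -> Prop) : club lt C1 -> club lt C2 -> club lt (fun x => C1 x /\ C2 x).
Proof.
  intros H1 H2.
  replace (fun x => C1 x /\ C2 x) with (fun x => forall b : bool, (if b then C1 else C2) x).
  - apply club_inter; [exact small_bool | intros [|]; assumption].
  - apply functional_extensionality; intros x. apply propositional_extensionality. split.
    + intros H. exact (conj (H true) (H false)).
    + intros [h1 h2] [|]; assumption.
Qed.

Definition diagonal_inter (C : L -> L -> Prop) : L -> Prop :=
  fun d => forall a, lt a d -> C a d.

Lemma club_diagonal (C : L -> L -> Prop) :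
  (forall a, club lt (C a)) -> club lt (diagonal_inter C).
Proof.
  intros HC. split.
  - intros t _ cofinal a at_. apply (proj1 (HC a)).
    + destruct (cofinal a at_) as [c [Dc [ac ct]]]. exists c. split; [exact (Dc a ac) | exact ct].
    + intros s st. destruct (le_max_below a s t at_ st) as [m [mt [am sm]]].
      destruct (cofinal m mt) as [c [Dc [mc ct]]]. exists c. split; [|split].
      * exact (Dc a (le_lt_trans _ _ _ am mc)).
      * exact (le_lt_trans _ _ _ sm mc).
      * exact ct.
  - assert (step : forall y, exists c, lt y c /\ forall a, le a y -> C a c).
    { intros y.
      destruct (proj2 (club_inter {a | le a y} (fun a => C (proj1_sig a)) (small_le_segment y)
                         (fun a => HC (proj1_sig a))) y) as [c [Cc yc]].
      exists c. split; [exact yc | intros a ay; exact (Cc (exist _ a ay))]. }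
    set (st y := choose (step y)).
    assert (st_spec : forall y, lt y (st y) /\ forall a, le a y -> C a (st y))
      by (intros y; exact (choose_spec (step y))).
    intros x. destruct (exists_closure_point st (fun y => proj1 (st_spec y)) x) as [d [xd Hd]].
    exists d. split; [|exact xd]. intros a ad. apply (proj1 (HC a)).
    + destruct (Hd a ad) as [z [az zd]]. exists (st z).
      split; [exact (proj2 (st_spec z) a (or_introl az)) | exact zd].
    + intros s sd. destruct (le_max_below a s d ad sd) as [m [md [am sm]]].
      destruct (Hd m md) as [z [mz zd]]. exists (st z). split; [|split].
      * exact (proj2 (st_spec z) a (or_introl (le_lt_trans _ _ _ am mz))).
      * exact (lt_trans _ _ _ (le_lt_trans _ _ _ sm mz) (proj1 (st_spec z))).
      * exact zd.
Qed.

Lemma lambda_regular (A : L -> Prop) : unbounded lt A -> equipotent {x | A x} L.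
Proof.
  intros HA.
  set (above x (rec : forall y, lt y x -> L) a := A a /\ forall y h, lt (rec y h) a).
  destruct (wf_recursive_choice L L lt (fun x rec a => above x rec a /\ forall b, above x rec b -> ~ lt b a)
              lt_wf) as [g Hg].
  { intros x rec. apply (well_founded_least _ lt _ lt_wf).
    destruct (small_bounded _ (fun y : {y | lt y x} => rec (proj1_sig y) (proj2_sig y)) (small_segment x))
      as [b Hb].
    destruct (HA b) as [a [Aa ba]]. exists a. split; [exact Aa|].
    intros y h. exact (lt_trans _ _ _ (Hb (exist _ y h)) ba). }
  assert (g_incr : forall x y, lt y x -> lt (g y) (g x)) by (intros x y; apply (proj1 (Hg x))).
  assert (g_inj : injective g).
  { apply lt_separated_injective. intros x y yx E. apply (lt_irrefl (g x)).
    rewrite E at 1. exact (g_incr x y yx). }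
  apply (equipotent_of_bijective_inv _ _ (fun x => exist A (g x) (proj1 (proj1 (Hg x))))). split.
  - intros x y E. exact (g_inj _ _ (f_equal (@proj1_sig _ _) E)).
  - intros [a Aa]. apply NNPP. intros missed.
    assert (below : forall x, lt (g x) a).
    { intros x. induction x as [x IH] using (well_founded_ind lt_wf).
      destruct (lt_trichotomy (g x) a) as [h|[h|h]]; [exact h | exfalso | exfalso].
      - apply missed. exists x. apply subset_eq_compat. exact h.
      - exact (proj2 (Hg x) a (conj Aa IH) h). }
    apply L_not_small, (small_card_le _ {y | lt y a}); [|exact (small_segment a)].
    exists (fun x => exist _ (g x) (below x)). intros x y E. exact (g_inj _ _ (f_equal (@proj1_sig _ _) E)).
Qed.

Definition trace_code (a : L) (A : L -> Prop) : M -> Prop :=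
  choose (small_le_segment a) (fun w => A (proj1_sig w)).

Lemma trace_code_agree a A B :
  trace_code a A = trace_code a B -> forall x, le x a -> (A x <-> B x).
Proof.
  intros E x xa. pose proof (choose_spec (small_le_segment a) _ _ E) as E'.
  pose proof (f_equal (fun S => S (exist (fun y => le y a) x xa)) E') as Ex. simpl in Ex.
  rewrite Ex. reflexivity.
Qed.

Definition agreeing (Cc : (L -> Prop) -> Prop) (j : L -> Prop) (a : L) : Type :=
  {B : {A | Cc A} | trace_code a (proj1_sig B) = trace_code a j}.

Definition thick (Cc : (L -> Prop) -> Prop) (j : L -> Prop) : Prop :=
  forall a, ~ card_le (agreeing Cc j a) {y | lt y a}.

Lemma exists_thick (Cc : (L -> Prop) -> Prop) :
  card_le (L -> Prop) {A | Cc A} -> exists j, Cc j /\ thick Cc j.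
Proof.
  intros pow_le_Cc. apply NNPP. intros none.
  assert (thin : forall x : {A | Cc A}, exists a, card_le (agreeing Cc (proj1_sig x) a) {y | lt y a}).
  { intros [A CA]. apply NNPP. intros n. apply none. exists A. split; [exact CA|].
    intros a Ha. apply n. exists a. exact Ha. }
  set (a x := choose (thin x)).
  apply L_not_small, (card_le_trans _ _ _ pow_le_Cc).
  eapply card_le_trans; [apply (card_le_fibers _ _ L (fun x => (a x, trace_code (a x) (proj1_sig x)))) |].
  - intros x. apply (card_le_trans _ (agreeing Cc (proj1_sig x) (a x))).
    + apply card_le_subtype. intros y E. injection E as Ea Et. rewrite Ea in Et. exact Et.
    + exact (card_le_trans _ _ _ (choose_spec (thin x)) (card_le_proj1_sig _ _)).
  - exact (card_le_prod_pow_M _ _ (card_le_prod_pow_M _ _ L_le_pow_M (card_le_refl _)) L_le_pow_M).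
Qed.

Lemma thick_avoids (Cc : (L -> Prop) -> Prop) (j : L -> Prop) (a : L)
    (rec : forall y, lt y a -> L -> Prop) :
  thick Cc j -> exists B, Cc B /\ trace_code a B = trace_code a j /\ forall y h, B <> rec y h.
Proof.
  intros j_thick. apply NNPP. intros none. apply (j_thick a).
  assert (covered : forall B : agreeing Cc j a,
            exists y : {y | lt y a}, proj1_sig (proj1_sig B) = rec (proj1_sig y) (proj2_sig y)).
  { intros [[B CB] tB]. apply NNPP. intros n. apply none. exists B.
    split; [exact CB | split; [exact tB|]]. intros y h e. apply n. exists (exist _ y h). exact e. }
  exists (fun B => choose (covered B)). intros B B' E.
  pose proof (choose_spec (covered B)) as HB. pose proof (choose_spec (covered B')) as HB'.
  rewrite E, <- HB' in HB.
  destruct B as [[B CB] tB], B' as [[B' CB'] tB']. apply subset_eq_compat, subset_eq_compat. exact HB.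
Qed.

Lemma club_filter_mono (A B : L -> Prop) :
  club_filter lt A -> (forall x, A x -> B x) -> club_filter lt B.
Proof. intros [C [HC CA]] AB. exists C. split; [exact HC | intros x Cx; exact (AB x (CA x Cx))]. Qed.

Lemma club_filter_agreeing_inter (j : L -> Prop) (i : L -> L -> Prop) :
  club_filter lt j -> (forall a, club_filter lt (i a)) -> (forall a x, le x a -> j x -> i a x) ->
  club_filter lt (fun x => forall a, i a x).
Proof.
  intros [Cj [club_Cj Cj_j]] Hi agree.
  set (C a := choose (Hi a)).
  assert (HC : forall a, club lt (C a) /\ forall x, C a x -> i a x) by (intros a; exact (choose_spec (Hi a))).
  exists (fun x => Cj x /\ diagonal_inter C x). split.
  - apply club_and; [exact club_Cj | apply club_diagonal; intros a; apply HC].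
  - intros x [Cjx DCx] a. destruct (classic (lt a x)) as [ax | nax].
    + exact (proj2 (HC a) x (DCx a ax)).
    + exact (agree a x (not_lt_le _ _ nax) (Cj_j x Cjx)).
Qed.

Lemma lambda_Gal : Gal_club L lt.
Proof.
  intros Cc Cc_club Cc_card.
  destruct (exists_thick Cc (card_ge_equipotent _ _ Cc_card)) as [j [Cj j_thick]].
  destruct (wf_recursive_choice L (L -> Prop) lt
              (fun a rec B => Cc B /\ trace_code a B = trace_code a j /\ forall y h, B <> rec y h)
              lt_wf (fun a rec => thick_avoids Cc j a rec j_thick)) as [i Hi].
  assert (i_inj : injective i)
    by (apply lt_separated_injective; intros a y ya; exact (proj2 (proj2 (Hi a)) y ya)).
  exists (fun B => exists a, i a = B). split; [|split].
  - intros B [a <-]. exact (proj1 (Hi a)).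
  - apply (equipotent_of_bijective_inv _ _
             (fun a => exist (fun B => exists a, i a = B) (i a) (ex_intro _ a eq_refl))).
    split.
    + intros a b E. exact (i_inj _ _ (f_equal (@proj1_sig _ _) E)).
    + intros [B [a e]]. exists a. apply subset_eq_compat. exact e.
  - apply (club_filter_mono (fun x => forall a, i a x)); [|intros x ix B [a <-]; exact (ix a)].
    apply (club_filter_agreeing_inter j);
      [exact (Cc_club j Cj) | intros a; exact (Cc_club _ (proj1 (Hi a))) |].
    intros a x xa jx. exact (proj2 (trace_code_agree a _ _ (proj1 (proj2 (Hi a))) x xa) jx).
Qed.

Lemma lambda_regular_uncountable : regular_uncountable_cardinal L lt.
Proof.
  split; [split; [split|] |].
  - exact lt_wo.
  - intros t Lt. exact (L_not_small (small_card_le _ _ (card_le_equipotent _ _ Lt) (small_segment t))).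
  - exact lambda_regular.
  - intros Lnat. exact (L_not_small (small_card_le _ _ Lnat small_nat)).
Qed.

Lemma not_card_le_lambda_M : ~ card_le L M.
Proof. intros LM. exact (L_not_small (small_card_le _ _ LM (card_le_refl _))). Qed.

End Lambda.

End Small.

Lemma exists_lambda (M : Type) (M_sum : card_le (M + M) M) (m0 : M) :
  exists (L : Type) (lt : L -> L -> Prop), strict_wellorder lt /\
    (forall x, small M {y | lt y x}) /\ ~ small M L /\ card_le L (M -> Prop) /\ card_le M L.
Proof.
  destruct (exists_strict_wellorder M) as [ltM woM].
  destruct (exists_strict_wellorder (M -> Prop)) as [ltW woW].
  (* The last point has a segment containing a copy of M -> Prop, hence not small; the
     first summand puts a copy of M below the least such point. *)
  set (ltX := sum_lt (sum_lt ltM ltW) (fun _ _ : unit => False)).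
  assert (woX : strict_wellorder ltX)
    by (apply strict_wellorder_sum; [apply strict_wellorder_sum | apply strict_wellorder_unit]; assumption).
  destruct (well_founded_least _ ltX (fun t => ~ small M {y | ltX y t}) (proj2 (proj2 (proj2 woX))))
    as [lam [lam_big lam_least]].
  { exists (inr tt). intros top_small.
    apply (cantor (M -> Prop)), (small_card_le M _ {y | ltX y (inr tt)}); [|exact top_small].
    exists (fun S => exist _ (inl (inr S)) I). intros S T E. injection E as E. exact E. }
  assert (M_below : forall m, ltX (inl (inl m)) lam).
  { intros m. destruct lam as [[m'|S]|[]]; simpl; try exact I.
    exfalso. apply lam_big, (small_card_le M _ M); [|apply card_le_refl].
    exists (fun y => match proj1_sig y with inl (inl m'') => m'' | _ => m0 end).
    intros [[[a|a]|a] ha] [[[b|b]|b] hb]; simpl in *; try contradiction.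
    intros <-. apply subset_eq_compat. reflexivity. }
  exists {t | ltX t lam}, (fun x y => ltX (proj1_sig x) (proj1_sig y)).
  split; [exact (strict_wellorder_sub _ _ _ woX)|]. split; [|split; [exact lam_big | split]].
  - intros x. apply (small_card_le M _ {t | ltX t (proj1_sig x)}).
    + exact (card_le_sig_sig _ _ (fun t => ltX t (proj1_sig x))).
    + apply NNPP. intros big. exact (lam_least _ big (proj2_sig x)).
  - exact (card_le_trans _ _ _ (card_le_proj1_sig _ _) (card_le_sum_M_pow_unit M M_sum m0)).
  - exists (fun m => exist _ (inl (inl m)) (M_below m)). intros m m' E. injection E as E. exact E.
Qed.

Lemma exists_regular_Gal_above (K : Univ) :
  exists (L : Univ) (lt : L -> L -> Prop),
    regular_uncountable_cardinal L lt /\ card_lt K L /\ Gal_club L lt.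
Proof.
  set (M := nat -> K + bool).
  assert (two : inr true <> inr false :> K + bool) by discriminate.
  assert (distinct : (fun _ => inr true) <> (fun _ => inr false) :> M)
    by (intros E; exact (two (f_equal (fun f => f 0) E))).
  assert (M_prod : card_le (M * M) M) by exact (card_le_seq_prod (K + bool)).
  assert (M_sum : card_le (M + M) M)
    by exact (card_le_trans _ _ _ (card_le_sum_prod _ _ _ distinct) M_prod).
  assert (nat_le_M : card_le nat M) by exact (card_le_nat_seq _ _ _ two).
  assert (K_le_M : card_le K M).
  { exists (fun k _ => inl k). intros k k' E. injection (f_equal (fun f => f 0) E) as e. exact e. }
  destruct (exists_lambda M M_sum (fun _ => inr true)) as (L & lt & wo & segments & big & L_le & M_le_L).
  exists L, lt. split; [|split; [split|]].
  - exact (lambda_regular_uncountable M M_sum M_prod (fun _ => inr true) nat_le_M L lt wo segments big).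
  - exact (card_le_trans _ _ _ K_le_M M_le_L).
  - intros L_le_K. exact (not_card_le_lambda_M M L big (card_le_trans _ _ _ L_le_K K_le_M)).
  - exact (lambda_Gal M M_sum M_prod (fun _ => inr true) nat_le_M L lt wo segments big L_le).
Qed.

Theorem proposition3p7 :
  (forall K : Univ,
     exists (L : Univ) (lt : L -> L -> Prop),
       regular_uncountable_cardinal L lt /\ card_lt K L /\ Gal_club L lt)
  /\
  ~ (forall (T : Univ) (lt : T -> T -> Prop),
       regular_uncountable_cardinal T lt -> ~ Gal_club T lt).
Proof.
  split; [exact exists_regular_Gal_above |].
  intros never_Gal. destruct (exists_regular_Gal_above unit) as (L & lt & L_regular & _ & L_Gal).
  exact (never_Gal L lt L_regular L_Gal).
Qed.
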